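(* Let $n\ge2$, $\beta_n=2^{1/(n-1)}$, and $p\in(0,1/2)$ with $p\ge\frac{\beta_n-1}{2\beta_n-1}$. Let $X_1,\dots,X_n$ be i.i.d. with $P(X_i=1)=P(X_i=-1)=p$, $P(X_i=0)=1-2p$. Then the optimal probability, over stopping times $\tau\in\{1,\dots,n\}$ with respect to the natural filtration, that either $X_\tau=1$ and $X_i\ne1$ for all $i>\tau$, or $X_\tau=-1$ and $X_i\ne-1$ for all $i>\tau$, is at least $2(2\beta_n-1)^{1-n}\ge 1/2$. *)

From Stdlib Require Import Reals ZArith List.
Import ListNotations.
Open Scope R_scope.

Fixpoint outcomes (n : nat) : list (list Z) :=
  match n with
  | O => [nil]
  | S m => flat_map (fun x => map (cons x) (outcomes m)) [(-1)%Z; 0%Z; 1%Z]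
  end.

Definition letter_weight (p : R) (x : Z) : R :=
  if Z.eqb x 0 then 1 - 2 * p else p.

Definition weight (p : R) (w : list Z) : R :=
  fold_right (fun x acc => letter_weight p x * acc) 1 w.

(* A stopping rule adapted to the natural filtration: [stop h] decides
   whether to stop at time k = length h having observed h = (X_1,...,X_k).
   The induced stopping time is the first k with [stop (X_1..X_k)] = true,
   and n if there is none (so tau ranges in {1,...,n}).  Every stopping time
   with values in {1,...,n} arises this way. *)
Fixpoint tau_aux (stop : list Z -> bool) (hist rest : list Z) : nat :=
  match rest with
  | nil => length hist
  | x :: r =>
      let h := hist ++ [x] in
      match r with
      | nil => length h
      | _ => if stop h then length h else tau_aux stop h r
      end
  end.

Definition tau (stop : list Z -> bool) (w : list Z) : nat := tau_aux stop nil w.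

Definition wins (w : list Z) (t : nat) : bool :=
  let x := nth (t - 1) w 0%Z in
  negb (Z.eqb x 0) && negb (existsb (Z.eqb x) (skipn t w)).

Definition win_prob (p : R) (n : nat) (stop : list Z -> bool) : R :=
  fold_right Rplus 0
    (map (fun w => if wins w (tau stop w) then weight p w else 0) (outcomes n)).

Definition beta (n : nat) : R := Rpower 2 (/ INR (n - 1)).

(* For 1 <= m <= n, consider the threshold rule "let X_1,...,X_(n-m)
   pass, then stop at the first nonzero observation (or at time n)".  It wins
   exactly when, among the last m observations, the first nonzero one is not
   repeated later; hence its winning probability is
       2 * ((1-p)^m - (1-2p)^m) = 2 * gap m p,
   independently of n.
   With r_j = 2^(1/j), the point P_j = (r_j - 1)/(2 r_j - 1) solves
   (1-x)^j = 2 (1-2x)^j.  Below P_j the map gap (j+1) is nondecreasing, and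
   gap (j+1) P_j = gap j P_j.  Since P_j decreases in j, an induction on k shows
   that whenever P_k <= p < 1/2 some m <= k satisfies
       gap m p >= gap k P_k = (2 r_k - 1)^(-k).
   Taking k = n - 1 (so r_k = beta n, P_k is the threshold of the statement) gives
   the first claim; the second one reduces to 2 r_k - 1 <= r_k^2.
   The file develops, in order: probabilities of events on outcome lists, the
   winning probability of the threshold rules, the real analysis of [gap], and
   finally the theorem. *)

From Stdlib Require Import Reals ZArith List Lia Lra Psatz.
Import ListNotations.
Open Scope R_scope.

Lemma sum_app (l1 l2 : list R) :
  fold_right Rplus 0 (l1 ++ l2) = fold_right Rplus 0 l1 + fold_right Rplus 0 l2.
Proof. induction l1 as [|x l1 IH]; simpl; [ring | rewrite IH; ring]. Qed.

Lemma outcomes_length (n : nat) (w : list Z) : In w (outcomes n) -> length w = n.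
Proof.
  revert w; induction n as [|n IH]; simpl; intros w Hw.
  - destruct Hw as [<-|[]]; reflexivity.
  - rewrite !in_app_iff in Hw.
    destruct Hw as [Hw|[Hw|[Hw|[]]]]; apply in_map_iff in Hw;
      destruct Hw as [u [<- Hu]]; simpl; rewrite (IH u Hu); reflexivity.
Qed.

Section Events.
Variable p : R.

Definition prob (n : nat) (A : list Z -> bool) : R :=
  fold_right Rplus 0 (map (fun w => if A w then weight p w else 0) (outcomes n)).
Arguments prob : simpl never.

Lemma win_prob_as_prob (n : nat) (stop : list Z -> bool) :
  win_prob p n stop = prob n (fun w => wins w (tau stop w)).
Proof. reflexivity. Qed.

Lemma prob_ext (n : nat) (A B : list Z -> bool) :
  (forall w, length w = n -> A w = B w) -> prob n A = prob n B.
Proof.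
  intros HAB. unfold prob. f_equal. apply map_ext_in. intros w Hw.
  rewrite (HAB w (outcomes_length n w Hw)). reflexivity.
Qed.

Lemma prob_nil (A : list Z -> bool) : prob 0 A = if A nil then 1 else 0.
Proof. unfold prob. simpl. destruct (A nil); simpl; ring. Qed.

Lemma prob_false (n : nat) : prob n (fun _ => false) = 0.
Proof. unfold prob. induction (outcomes n); simpl; [|rewrite IHl]; ring. Qed.

Lemma prob_cons (n : nat) (A : list Z -> bool) :
  prob (S n) A = p * prob n (fun w => A ((-1)%Z :: w))
               + (1 - 2 * p) * prob n (fun w => A (0%Z :: w))
               + p * prob n (fun w => A (1%Z :: w)).
Proof.
  assert (Hcons : forall x l,
    fold_right Rplus 0 (map (fun w => if A w then weight p w else 0) (map (cons x) l))
    = letter_weight p x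
      * fold_right Rplus 0 (map (fun w => if A (x :: w) then weight p w else 0) l)).
  { intros x l. induction l as [|w l IH]; simpl; [ring|].
    rewrite IH. destruct (A (x :: w)); simpl; ring. }
  unfold prob. simpl outcomes. simpl flat_map.
  rewrite !map_app, !sum_app, !Hcons. unfold letter_weight; simpl. ring.
Qed.

Lemma prob_suffix (a b : nat) (A B : list Z -> bool) :
  (forall pre suf, length pre = a -> length suf = b -> A (pre ++ suf) = B suf) ->
  prob (a + b) A = prob b B.
Proof.
  revert A; induction a as [|a IH]; intros A HAB.
  - apply prob_ext. intros w Hw. apply (HAB nil w); auto.
  - simpl (S a + b)%nat. rewrite prob_cons, !(IH (fun w => A (_ :: w))); [ring| | |].
    all: intros pre suf Hpre Hsuf; apply (HAB (_ :: pre)); simpl; auto.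
Qed.

Lemma prob_never (m : nat) (x : Z) : x = 1%Z \/ x = (-1)%Z ->
  prob m (fun r => negb (existsb (Z.eqb x) r)) = (1 - p) ^ m.
Proof.
  intros Hx. induction m as [|m IH].
  - rewrite prob_nil. simpl. ring.
  - rewrite prob_cons. simpl existsb.
    destruct Hx as [-> | ->]; simpl Z.eqb; simpl negb; simpl orb;
      rewrite IH, prob_false; simpl; ring.
Qed.

End Events.

Fixpoint first_nonzero (w : list Z) : nat :=
  match w with
  | nil => O
  | x :: r => match r with
              | nil => 1%nat
              | _ => if Z.eqb x 0 then S (first_nonzero r) else 1%nat
              end
  end.

Lemma first_nonzero_pos (w : list Z) : w <> nil -> (1 <= first_nonzero w)%nat.
Proof.
  destruct w as [|x [|y r]]; [tauto| |]; intros _; simpl; [lia|].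
  destruct (Z.eqb x 0); lia.
Qed.

Definition greedy_wins (w : list Z) : bool := wins w (first_nonzero w).

Lemma greedy_wins_cons (x : Z) (r : list Z) :
  greedy_wins (x :: r) =
  if Z.eqb x 0 then greedy_wins r else negb (existsb (Z.eqb x) r).
Proof.
  unfold greedy_wins. destruct (Z.eqb x 0) eqn:Hx.
  - apply Z.eqb_eq in Hx; subst x. destruct r as [|y r]; [reflexivity|].
    change (first_nonzero (0%Z :: y :: r)) with (S (first_nonzero (y :: r))).
    assert (Hpos := first_nonzero_pos (y :: r) ltac:(discriminate)).
    destruct (first_nonzero (y :: r)) as [|k]; [lia|].
    unfold wins. replace (S (S k) - 1)%nat with (S k) by lia.
    replace (S k - 1)%nat with k by lia. reflexivity.
  - assert (Hfirst : first_nonzero (x :: r) = 1%nat).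
    { destruct r; simpl; [|rewrite Hx]; reflexivity. }
    unfold wins. rewrite Hfirst. simpl. rewrite Hx. reflexivity.
Qed.

Lemma prob_greedy_wins (p : R) (m : nat) :
  prob p m greedy_wins = 2 * ((1 - p) ^ m - (1 - 2 * p) ^ m).
Proof.
  induction m as [|m IH].
  - rewrite prob_nil. simpl. ring.
  - rewrite prob_cons.
    rewrite (prob_ext p m (fun w => greedy_wins ((-1)%Z :: w))
               (fun w => negb (existsb (Z.eqb (-1)) w))),
            (prob_ext p m (fun w => greedy_wins (0%Z :: w)) greedy_wins),
            (prob_ext p m (fun w => greedy_wins (1%Z :: w))
               (fun w => negb (existsb (Z.eqb 1) w)))
      by (intros; rewrite greedy_wins_cons; reflexivity).
    rewrite !prob_never, IH by auto. simpl. ring.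
Qed.

Definition stop_after (s : nat) (h : list Z) : bool :=
  Nat.leb s (length h) && negb (Z.eqb (last h 0%Z) 0).

Lemma tau_stop_after_prefix (s : nat) (pre : list Z) : forall hist suf,
  suf <> nil -> (length hist + length pre < s)%nat ->
  tau_aux (stop_after s) hist (pre ++ suf) = tau_aux (stop_after s) (hist ++ pre) suf.
Proof.
  induction pre as [|y pre IH]; intros hist suf Hsuf Hlen.
  - rewrite app_nil_r. reflexivity.
  - simpl app. simpl tau_aux.
    destruct (pre ++ suf) as [|z t] eqn:Hps; [apply app_eq_nil in Hps; tauto|].
    rewrite <- Hps. unfold stop_after at 1. rewrite length_app.
    replace (Nat.leb s (length hist + length [y])) with false
      by (symmetry; apply Nat.leb_gt; simpl in *; lia).
    simpl andb. cbv iota.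
    rewrite IH by (auto; rewrite length_app; simpl in *; lia).
    rewrite <- app_assoc. reflexivity.
Qed.

Lemma tau_stop_after_suffix (s : nat) (suf : list Z) : forall hist,
  (s - 1 <= length hist)%nat ->
  tau_aux (stop_after s) hist suf = (length hist + first_nonzero suf)%nat.
Proof.
  induction suf as [|x r IH]; intros hist Hhist; simpl tau_aux; [simpl; lia|].
  destruct r as [|y r]; [rewrite length_app; simpl; lia|].
  unfold stop_after at 1. rewrite last_last, length_app.
  replace (Nat.leb s (length hist + length [x])) with true
    by (symmetry; apply Nat.leb_le; simpl; lia).
  change (first_nonzero (x :: y :: r))
    with (if Z.eqb x 0 then S (first_nonzero (y :: r)) else 1%nat).
  destruct (Z.eqb x 0); simpl negb; cbv iota.
  - rewrite IH by (rewrite length_app; simpl; lia). rewrite length_app. simpl. lia.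
  - simpl. lia.
Qed.

Lemma wins_shift (pre suf : list Z) (k : nat) : (1 <= k)%nat ->
  wins (pre ++ suf) (length pre + k) = wins suf k.
Proof.
  intros Hk. unfold wins.
  assert (Hskip : skipn (length pre + k) (pre ++ suf) = skipn k suf)
    by (induction pre; simpl; auto).
  rewrite Hskip. replace (length pre + k - 1)%nat with (length pre + (k - 1))%nat by lia.
  rewrite app_nth2_plus. reflexivity.
Qed.

Lemma win_prob_threshold (p : R) (a b : nat) : (1 <= b)%nat ->
  win_prob p (a + b) (stop_after (a + 1)) = 2 * ((1 - p) ^ b - (1 - 2 * p) ^ b).
Proof.
  intros Hb. rewrite win_prob_as_prob, <- prob_greedy_wins.
  apply prob_suffix. intros pre suf Hpre Hsuf.
  assert (Hne : suf <> nil) by (intros ->; simpl in Hsuf; lia).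
  unfold tau. rewrite tau_stop_after_prefix by (simpl; auto; lia). simpl app.
  rewrite tau_stop_after_suffix by lia.
  apply wins_shift, first_nonzero_pos, Hne.
Qed.

Fixpoint hsum (k : nat) (u v : R) : R :=
  match k with O => 0 | S k => u ^ k + v * hsum k u v end.

Lemma pow_sub_hsum (k : nat) (u v : R) : u ^ k - v ^ k = (u - v) * hsum k u v.
Proof.
  induction k as [|k IH]; simpl; [ring|].
  transitivity ((u - v) * u ^ k + v * (u ^ k - v ^ k)); [ring|]. rewrite IH; ring.
Qed.

Lemma hsum_nonneg (k : nat) (u v : R) : 0 <= u -> 0 <= v -> 0 <= hsum k u v.
Proof.
  intros Hu Hv; induction k as [|k IH]; simpl; [lra|].
  apply Rplus_le_le_0_compat; [apply pow_le | apply Rmult_le_pos]; auto.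
Qed.

Lemma hsum_compare (j : nat) (q q' r r' : R) :
  0 <= q -> 0 <= q' -> 0 <= r -> 0 <= r' -> q' * r <= q * r' ->
  q' ^ j * hsum (S j) r r' <= r' ^ j * hsum (S j) q q'.
Proof.
  intros Hq Hq' Hr Hr' Hratio. induction j as [|j IH]; [simpl; lra|].
  assert (Hpow : (q' * r) ^ S j <= (q * r') ^ S j) by (apply pow_incr; split; nra).
  rewrite !Rpow_mult_distr in Hpow.
  assert (Hrec : q' * r' * (q' ^ j * hsum (S j) r r')
                 <= q' * r' * (r' ^ j * hsum (S j) q q'))
    by (apply Rmult_le_compat_l; nra).
  replace (q' ^ S j * hsum (S (S j)) r r')
    with (q' ^ S j * r ^ S j + q' * r' * (q' ^ j * hsum (S j) r r')) by (simpl; ring).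
  replace (r' ^ S j * hsum (S (S j)) q q')
    with (q ^ S j * r' ^ S j + q' * r' * (r' ^ j * hsum (S j) q q')) by (simpl; ring).
  lra.
Qed.

(* Half of the success probability of the greedy rule on m observations. *)
Definition gap (m : nat) (x : R) : R := (1 - x) ^ m - (1 - 2 * x) ^ m.

(* gap (j+1) is nondecreasing on [0, y] when (1-y)^j <= 2 (1-2y)^j; this is the
   sign of its derivative, proved by factoring the difference of powers. *)
Lemma gap_mono (j : nat) (x y : R) : 0 <= x -> x <= y -> y < 1/2 ->
  (1 - y) ^ j <= 2 * (1 - 2 * y) ^ j -> gap (S j) x <= gap (S j) y.
Proof.
  intros Hx Hxy Hy Hcond. unfold gap.
  set (Sr := hsum (S j) (1 - x) (1 - y)). set (Sq := hsum (S j) (1 - 2 * x) (1 - 2 * y)).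
  assert (Hr := pow_sub_hsum (S j) (1 - x) (1 - y)). fold Sr in Hr.
  assert (Hq := pow_sub_hsum (S j) (1 - 2 * x) (1 - 2 * y)). fold Sq in Hq.
  assert (HSq : 0 <= Sq) by (apply hsum_nonneg; lra).
  assert (Hqj : 0 < (1 - 2 * y) ^ j) by (apply pow_lt; lra).
  assert (Hsums : Sr <= 2 * Sq).
  { assert (Hcmp : (1 - 2 * y) ^ j * Sr <= (1 - y) ^ j * Sq)
      by (apply hsum_compare; nra).
    apply (Rmult_le_reg_l ((1 - 2 * y) ^ j)); nra. }
  nra.
Qed.

Lemma gap_balanced (j : nat) (x : R) :
  (1 - x) ^ j = 2 * (1 - 2 * x) ^ j -> gap (S j) x = gap j x.
Proof. intros Hbal. unfold gap. simpl. rewrite Hbal. ring. Qed.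

(* The ratio (1-x)/(1-2x) increases with x, so the condition of [gap_mono]
   propagates downwards from a balance point. *)
Lemma below_balance (j : nat) (x P : R) : 0 <= x -> x <= P -> P < 1/2 ->
  (1 - P) ^ j = 2 * (1 - 2 * P) ^ j -> (1 - x) ^ j <= 2 * (1 - 2 * x) ^ j.
Proof.
  intros Hx HxP HP Hbal.
  assert (Hpow : ((1 - 2 * P) * (1 - x)) ^ j <= ((1 - 2 * x) * (1 - P)) ^ j)
    by (apply pow_incr; split; nra).
  rewrite !Rpow_mult_distr, Hbal in Hpow.
  assert (0 < (1 - 2 * P) ^ j) by (apply pow_lt; lra).
  nra.
Qed.

Definition root2 (j : nat) : R := Rpower 2 (/ INR j).

(* The balance point of exponent j: the solution of (1-x)^j = 2 (1-2x)^j. *)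
Definition balance (j : nat) : R := (root2 j - 1) / (2 * root2 j - 1).

Lemma root2_gt1 (j : nat) : (1 <= j)%nat -> 1 < root2 j.
Proof.
  intros Hj. unfold root2. rewrite <- (Rpower_O 2) at 1 by lra.
  apply Rpower_lt; [lra|]. apply Rinv_0_lt_compat, lt_0_INR. lia.
Qed.

Lemma root2_pow (j : nat) : (1 <= j)%nat -> root2 j ^ j = 2.
Proof.
  intros Hj. assert (H1 := root2_gt1 j Hj).
  rewrite <- Rpower_pow by lra. unfold root2. rewrite Rpower_mult.
  rewrite Rinv_l by (apply not_0_INR; lia). apply Rpower_1; lra.
Qed.

Lemma one_minus_2balance (j : nat) : (1 <= j)%nat ->
  1 - 2 * balance j = / (2 * root2 j - 1).
Proof. intros Hj. assert (H1 := root2_gt1 j Hj). unfold balance. field. lra. Qed.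

Lemma one_minus_balance (j : nat) : (1 <= j)%nat ->
  1 - balance j = root2 j * / (2 * root2 j - 1).
Proof. intros Hj. assert (H1 := root2_gt1 j Hj). unfold balance. field. lra. Qed.

Lemma balance_range (j : nat) : (1 <= j)%nat -> 0 < balance j < 1/2.
Proof.
  intros Hj. assert (H1 := root2_gt1 j Hj). assert (Hq := one_minus_2balance j Hj).
  assert (0 < / (2 * root2 j - 1)) by (apply Rinv_0_lt_compat; lra).
  assert (/ (2 * root2 j - 1) < 1) by (rewrite <- Rinv_1; apply Rinv_lt_contravar; lra).
  lra.
Qed.

Lemma balance_eq (j : nat) : (1 <= j)%nat ->
  (1 - balance j) ^ j = 2 * (1 - 2 * balance j) ^ j.
Proof.
  intros Hj. rewrite one_minus_balance, one_minus_2balance, Rpow_mult_distr, root2_pow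
    by auto. reflexivity.
Qed.

Lemma balance_decr (j : nat) : (1 <= j)%nat -> balance (S j) <= balance j.
Proof.
  intros Hj. assert (H1 := root2_gt1 j Hj). assert (H2 := root2_gt1 (S j) ltac:(lia)).
  assert (Hle : root2 (S j) <= root2 j).
  { unfold root2. apply Rle_Rpower; [lra|].
    apply Rinv_le_contravar; [apply lt_0_INR; lia | apply le_INR; lia]. }
  assert (/ (2 * root2 j - 1) <= / (2 * root2 (S j) - 1)) by (apply Rinv_le_contravar; lra).
  rewrite <- !one_minus_2balance in * by lia. lra.
Qed.

Lemma gap_at_balance (j : nat) : (1 <= j)%nat ->
  gap j (balance j) = 1 / (2 * root2 j - 1) ^ j.
Proof.
  intros Hj. unfold gap. rewrite balance_eq, one_minus_2balance, pow_inv by auto.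
  unfold Rdiv. ring.
Qed.

Lemma choose_threshold (p : R) (k : nat) : (1 <= k)%nat -> balance k <= p -> p < 1/2 ->
  exists m, (1 <= m <= k)%nat /\ gap k (balance k) <= gap m p.
Proof.
  intros Hk Hp Hp2. induction k as [|[|k] IH]; [lia| |].
  - exists 1%nat. split; [lia|]. assert (H := balance_range 1 ltac:(lia)).
    apply gap_mono; simpl; lra.
  - assert (Hr1 := balance_range (S k) ltac:(lia)).
    assert (Hr2 := balance_range (S (S k)) ltac:(lia)).
    assert (Hbal := balance_eq (S k) ltac:(lia)).
    assert (Hdecr := balance_decr (S k) ltac:(lia)).
    destruct (Rle_lt_dec (balance (S k)) p) as [Hle|Hlt].
    + (* p is above the previous balance point: reuse its threshold *)
      destruct (IH ltac:(lia) Hle) as [m [Hm Hgap]]. exists m. split; [lia|].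
      eapply Rle_trans; [|exact Hgap]. rewrite <- (gap_balanced (S k) (balance (S k)) Hbal).
      apply gap_mono; lra.
    + (* p lies between the two balance points: use all S (S k) observations *)
      exists (S (S k)). split; [lia|].
      apply gap_mono; try lra. apply (below_balance _ _ (balance (S k))); lra.
Qed.

(* 2 (2 r_j - 1)^(-j) >= 1/2 because 2 r_j - 1 <= r_j^2 and r_j^(2j) = 4. *)
Lemma bound_ge_half (j : nat) : (1 <= j)%nat -> 1/2 <= 2 / (2 * root2 j - 1) ^ j.
Proof.
  intros Hj. assert (H1 := root2_gt1 j Hj). assert (Hpow := root2_pow j Hj).
  assert (Hsq : (2 * root2 j - 1) ^ j <= (root2 j ^ 2) ^ j) by (apply pow_incr; nra).
  rewrite <- pow_mult, Nat.mul_comm, pow_mult, Hpow in Hsq.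
  assert (0 < (2 * root2 j - 1) ^ j) by (apply pow_lt; lra).
  apply (Rmult_le_reg_r ((2 * root2 j - 1) ^ j)); auto.
  replace (2 / (2 * root2 j - 1) ^ j * (2 * root2 j - 1) ^ j) with 2 by (field; lra).
  simpl in Hsq. lra.
Qed.

Theorem mainTheorem10 (n : nat) (p : R) :
  (2 <= n)%nat ->
  0 < p -> p < 1 / 2 ->
  (beta n - 1) / (2 * beta n - 1) <= p ->
  (exists stop : list Z -> bool,
      2 / (2 * beta n - 1) ^ (n - 1) <= win_prob p n stop)
  /\ 1 / 2 <= 2 / (2 * beta n - 1) ^ (n - 1).
Proof.
  intros Hn Hp0 Hp1 Hthreshold.
  change (beta n) with (root2 (n - 1)) in *.
  change ((root2 (n - 1) - 1) / (2 * root2 (n - 1) - 1)) with (balance (n - 1))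
    in Hthreshold.
  split; [|apply bound_ge_half; lia].
  destruct (choose_threshold p (n - 1) ltac:(lia) Hthreshold Hp1) as [m [Hm Hgap]].
  exists (stop_after (n - m + 1)).
  assert (Hwin := win_prob_threshold p (n - m) m ltac:(lia)).
  rewrite Nat.sub_add in Hwin by lia. rewrite Hwin.
  rewrite gap_at_balance in Hgap by lia. unfold gap in Hgap. unfold Rdiv in *. lra.
Qed.
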